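(* Let $i\in[s]$ and let $T$ be any tournament. Then every homomorphism from $F_i^{\bullet\bullet}$ (viewed as an ordinary digraph) to $T$ is injective.
   Context: All digraphs are finite and loopless; a tournament is a digraph in which every pair of distinct vertices is joined by exactly one arc. A homomorphism from a digraph $F$ to a digraph $H$ is a map $\varphi:V(F)\to V(H)$ with $(\varphi(u),\varphi(v))\in E(H)$ whenever $(u,v)\in E(F)$. Construction of $F_i^{\bullet\bullet}$: fix $s\in\mathbb{N}^+$, a positive integer $m$, and a tournament $F_0$ on vertex set $[m]$ satisfying: (I) every vertex has out-degree and in-degree at most $2m/3$; (II) there are no disjoint $A_1,A_2\subseteq[m]$ with $|A_1|=|A_2|=\lceil\sqrt m\,\rceil$ such that $(a_1,a_2)$ is an arc for all $a_1\in A_1,a_2\in A_2$; (III) for every $S\subseteq[m]$ with $|S|\ge 2m/13-\sqrt m$, $F_0[S]$ contains a directed cycle. Let $k_1,\dots,k_s$ be integers in the open interval $(2m/3+2,\,5m/6)$ with $k_i>k_{i+1}+1$ for $1\le i<s$. For $i\in[s]$, $F_i^{\bullet\bullet}$ is the digraph on vertex set $[m]\cup\{z_i,w_i\}$ ($z_i,w_i$ two new vertices, called roots) whose arcs are all arcs of $F_0$, together with the arcs $z_i\to v$ and $v\to w_i$ for every $1\le v\le k_i$, and the arcs $u\to z_i$ and $w_i\to u$ for every $k_i<u\le m$. There is no arc between $z_i$ and $w_i$. *)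

From HB Require Import structures.
From mathcomp Require Import all_boot all_order all_algebra.
From mathcomp Require Import Rstruct.
Set Implicit Arguments.
Unset Strict Implicit.
Unset Printing Implicit Defensive.
Import Order.TTheory GRing.Theory Num.Theory.

Local Open Scope ring_scope.

Notation RR := Rdefinitions.R.

Definition is_tournament (V : finType) (E : rel V) : Prop :=
  (forall x, ~~ E x x) /\ (forall x y, x != y -> E x y (+) E y x).

Definition is_hom (V W : finType) (EV : rel V) (EW : rel W) (phi : V -> W) :=
  forall x y, EV x y -> EW (phi x) (phi y).

Definition has_dicycle_in (V : finType) (E : rel V) (S : {set V}) : Prop :=
  exists c : seq V, [/\ (2 <= size c)%N, uniq c, {subset c <= S} & cycle E c].

(* Vertex [v] of [m] = {1,..,m} is represented by the ordinal (v-1) : 'I_m. *)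

Definition condI (m : nat) (E : rel 'I_m) : Prop :=
  forall v : 'I_m,
    (#|[set u | E v u]|%:R <= 2 * m%:R / 3 :> RR) /\
    (#|[set u | E u v]|%:R <= 2 * m%:R / 3 :> RR).

Definition condII (m : nat) (E : rel 'I_m) : Prop :=
  ~ exists A1 A2 : {set 'I_m},
      [/\ [disjoint A1 & A2],
          (#|A1|%:Z = Num.ceil (Num.sqrt (m%:R : RR))),
          (#|A2|%:Z = Num.ceil (Num.sqrt (m%:R : RR))) &
          (forall a1 a2, a1 \in A1 -> a2 \in A2 -> E a1 a2)].

Definition condIII (m : nat) (E : rel 'I_m) : Prop :=
  forall S : {set 'I_m},
    (2 * m%:R / 13 - Num.sqrt (m%:R) <= #|S|%:R :> RR) -> has_dicycle_in E S.

(* Vertex set [m] ∪ {z_i, w_i}: inl v is a vertex of F_0,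
   inr false is the root z_i, inr true is the root w_i. *)
Definition Fvert (m : nat) : finType := ('I_m + bool)%type.

(* Arcs of F_i^{••} with threshold k = k_i (ordinal v stands for v+1, so
   "v+1 <= k" is "v < k" and "k < u+1" is "k <= u"). *)
Definition Fedge (m : nat) (E : rel 'I_m) (k : nat) : rel (Fvert m) :=
  fun x y =>
    match x, y with
    | inl u, inl v => E u v
    | inr false, inl v => (v < k)%N        (* z_i -> v, 1 <= v <= k *)
    | inl v, inr true => (v < k)%N         (* v -> w_i, 1 <= v <= k *)
    | inl u, inr false => (k <= u)%N       (* u -> z_i, k < u <= m *)
    | inr true, inl u => (k <= u)%N        (* w_i -> u, k < u <= m *)
    | _, _ => false
    end.

(* A homomorphism into a tournament cannot identify two vertices joined by an
   arc (tournaments are loopless), nor two vertices joined by a directed path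
   x -> z -> y (the image would be a 2-cycle, but tournaments are oriented).
   In F_i^{••} every two vertices other than the roots are adjacent, since F_0
   is a tournament and each vertex of F_0 is joined to both roots, and the
   roots are joined by the path z_i -> 1 -> w_i. *)

From mathcomp Require Import all_boot all_order all_algebra.
From mathcomp Require Import Rstruct.
From mathcomp Require Import lra.
Set Implicit Arguments.
Unset Strict Implicit.
Unset Printing Implicit Defensive.
Import Order.TTheory GRing.Theory Num.Theory.
Local Open Scope ring_scope.

Definition reach_le2 (V : finType) (E : rel V) (x y : V) : Prop :=
  E x y \/ exists z, E x z /\ E z y.

Section TournamentHom.

Variables (V W : finType) (EV : rel V) (EW : rel W) (phi : V -> W).
Hypothesis tourW : is_tournament EW.
Hypothesis homphi : is_hom EV EW phi.

Lemma tournament_asym a b : EW a b -> ~~ EW b a.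
Proof.
case: tourW => irrW totW Eab; have [eab|nab] := eqVneq a b.
  by move: Eab; rewrite eab (negbTE (irrW b)).
by move: (totW a b nab); rewrite Eab.
Qed.

Lemma hom_neq_of_reach_le2 x y : reach_le2 EV x y -> phi x != phi y.
Proof.
case=> [/homphi Exy | [z [/homphi Exz /homphi Ezy]]]; apply/eqP=> exy.
  by case: tourW => irrW _; move: (irrW (phi y)); rewrite -{1}exy Exy.
by move: (tournament_asym Ezy); rewrite -exy Exz.
Qed.

Lemma hom_injective_of_reach_le2 :
  (forall x y, x != y -> reach_le2 EV x y \/ reach_le2 EV y x) ->
  injective phi.
Proof.
move=> reach x y exy; apply/eqP; apply: contraT => nxy.
by case: (reach x y nxy) => /hom_neq_of_reach_le2; rewrite exy eqxx.
Qed.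

End TournamentHom.

Lemma Fedge_reach_le2 (m : nat) (F0 : rel 'I_m) (k : nat) :
  (0 < m)%N -> (0 < k)%N -> is_tournament F0 ->
  forall x y, x != y ->
    reach_le2 (Fedge F0 k) x y \/ reach_le2 (Fedge F0 k) y x.
Proof.
move=> m0 k0 [_ totF0] x y nxy.
have w_arcs u : reach_le2 (Fedge F0 k) (inl u) (inr true)
               \/ reach_le2 (Fedge F0 k) (inr true) (inl u).
  by case: (ltnP u k) => uk; [left | right]; left.
have z_arcs u : reach_le2 (Fedge F0 k) (inl u) (inr false)
               \/ reach_le2 (Fedge F0 k) (inr false) (inl u).
  by case: (ltnP u k) => uk; [right | left]; left.
have z_to_w : reach_le2 (Fedge F0 k) (inr false) (inr true).
  by right; exists (inl (Ordinal m0)).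
case: x nxy => [u|[]]; case: y => [v|[]] nxy; try by rewrite eqxx in nxy.
- have nuv : u != v by apply: contraNneq nxy => ->.
  case Euv: (F0 u v); first by left; left.
  by right; left; move: (totF0 u v nuv); rewrite Euv.
- exact: w_arcs.
- exact: z_arcs.
- by case: (w_arcs v); [right | left].
- by right; exact: z_to_w.
- by case: (z_arcs v); [right | left].
- by left; exact: z_to_w.
Qed.

Lemma threshold_pos (k : nat) (r : RR) :
  0 <= r -> 2 * r / 3 + 2 < k%:R -> (0 < k)%N.
Proof. by move=> r0 rk; rewrite -(ltr0n RR); lra. Qed.

Theorem claim4p2
  (s m : nat) (F0 : rel 'I_m) (k : nat -> nat) (i : nat)
  (T : finType) (ET : rel T) (phi : Fvert m -> T) :
  (0 < s)%N ->
  (0 < m)%N ->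
  is_tournament F0 ->
  condI F0 -> condII F0 -> condIII F0 ->
  (forall j, (1 <= j <= s)%N ->
      (2 * m%:R / 3 + 2 < (k j)%:R :> RR) /\ ((k j)%:R < 5 * m%:R / 6 :> RR)) ->
  (forall j, (1 <= j < s)%N -> (k (j.+1)).+1 < k j)%N ->
  (1 <= i <= s)%N ->
  is_tournament ET ->
  is_hom (Fedge F0 (k i)) ET phi ->
  injective phi.
Proof.
move=> _ m0 tourF0 _ _ _ kbounds _ Hi tourT homphi.
have ki0 : (0 < k i)%N := threshold_pos (ler0n RR m) (kbounds i Hi).1.
exact: hom_injective_of_reach_le2 tourT homphi (Fedge_reach_le2 m0 ki0 tourF0).
Qed.
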